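(* Let $(X,T)$ be a minimal Cantor system with a sequence of CKR partitions satisfying (KR1)–(KR6), and let $\lambda\in\mathbb C$ with $|\lambda|=1$. (1) If $\lambda$ is a continuous eigenvalue of $(X,T)$, then $\sup_{1\le k\le C(n)}|\lambda^{h_k(n)}-1|\to0$ as $n\to\infty$. (2) If $$\sum_{m\ge1}\frac{\max_{1\le k\le C(m+1)}h_k(m+1)}{\min_{1\le k\le C(m)}h_k(m)}\ \max_{1\le k\le C(m)}|\lambda^{h_k(m)}-1|<\infty,$$ then $\lambda$ is a continuous eigenvalue of $(X,T)$.
   Context: CKR partitions $\mathcal P(n)=\{T^{-j}B_k(n):1\le k\le C(n),0\le j<h_k(n)\}$ (partitions of $X$, $B_k(n)$ clopen) with $\mathcal P(0)$ trivial, roof $B(n)=\bigcup_kB_k(n)$. (KR1) $B(n+1)\subseteq B(n)$; (KR2) $\mathcal P(n+1)$ refines $\mathcal P(n)$; (KR3) $\bigcap_nB(n)$ is a single point; (KR4) the partitions generate the topology; (KR5) for all $n\ge1$, $k\le C(n-1)$, $l\le C(n)$ some $0\le j<h_l(n)$ has $T^{-j}B_l(n)\subseteq B_k(n-1)$; (KR6) $B(n)\subseteq B_1(n-1)$ for $n\ge1$. A continuous eigenvalue is $\lambda$ with $f\circ T=\lambda f$ for some continuous nonzero $f:X\to\mathbb C$. *)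

From Stdlib Require Import Reals Lra Lia List.
Import ListNotations.
Open Scope R_scope.

Record Cx := mkCx { Cre : R; Cim : R }.
Definition Cx0 : Cx := mkCx 0 0.
Definition Cx1 : Cx := mkCx 1 0.
Definition Cx_add (a b : Cx) : Cx := mkCx (Cre a + Cre b) (Cim a + Cim b).
Definition Cx_sub (a b : Cx) : Cx := mkCx (Cre a - Cre b) (Cim a - Cim b).
Definition Cx_mul (a b : Cx) : Cx :=
  mkCx (Cre a * Cre b - Cim a * Cim b) (Cre a * Cim b + Cim a * Cre b).
Fixpoint Cx_pow (a : Cx) (n : nat) : Cx :=
  match n with O => Cx1 | S m => Cx_mul a (Cx_pow a m) end.
Definition Cx_norm (a : Cx) : R := sqrt (Cre a * Cre a + Cim a * Cim a).

Definition is_metric {X : Type} (d : X -> X -> R) : Prop :=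
  (forall x y, 0 <= d x y) /\ (forall x y, d x y = 0 <-> x = y) /\
  (forall x y, d x y = d y x) /\ (forall x y z, d x z <= d x y + d y z).

Definition is_open {X : Type} (d : X -> X -> R) (U : X -> Prop) : Prop :=
  forall x, U x -> exists eps, eps > 0 /\ forall y, d x y < eps -> U y.
Definition is_closed {X : Type} (d : X -> X -> R) (U : X -> Prop) : Prop :=
  is_open d (fun x => ~ U x).
Definition is_clopen {X : Type} (d : X -> X -> R) (U : X -> Prop) : Prop :=
  is_open d U /\ is_closed d U.

Definition seq_converges {X : Type} (d : X -> X -> R) (u : nat -> X) (l : X) : Prop :=
  forall eps, eps > 0 -> exists N, forall n, (n >= N)%nat -> d (u n) l < eps.

(* compactness of a metric space = sequential compactness *)
Definition compact_space {X : Type} (d : X -> X -> R) : Prop :=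
  forall u : nat -> X, exists (phi : nat -> nat) (l : X),
    (forall n, (phi n < phi (S n))%nat) /\ seq_converges d (fun n => u (phi n)) l.

Definition connected_subset {X : Type} (d : X -> X -> R) (A : X -> Prop) : Prop :=
  ~ exists U V : X -> Prop, is_open d U /\ is_open d V /\
      (forall x, A x -> U x \/ V x) /\ (exists x, A x /\ U x) /\
      (exists x, A x /\ V x) /\ (forall x, A x -> U x -> V x -> False).

Definition totally_disconnected {X : Type} (d : X -> X -> R) : Prop :=
  forall A : X -> Prop, connected_subset d A -> forall x y, A x -> A y -> x = y.

Definition no_isolated_points {X : Type} (d : X -> X -> R) : Prop :=
  forall x eps, eps > 0 -> exists y, y <> x /\ d x y < eps.

Definition cantor_space {X : Type} (d : X -> X -> R) : Prop :=
  is_metric d /\ (exists x : X, True) /\ compact_space d /\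
  totally_disconnected d /\ no_isolated_points d.

Definition continuous_map {X Y : Type} (dX : X -> X -> R) (dY : Y -> Y -> R)
  (f : X -> Y) : Prop :=
  forall x eps, eps > 0 -> exists delta, delta > 0 /\
    forall y, dX x y < delta -> dY (f x) (f y) < eps.

Definition homeomorphism {X : Type} (d : X -> X -> R) (T : X -> X) : Prop :=
  continuous_map d d T /\
  exists S : X -> X, continuous_map d d S /\
    (forall x, S (T x) = x) /\ (forall x, T (S x) = x).

(* y is in the (two-sided) orbit of x: y = T^n x or y = T^{-n} x *)
Definition in_orbit {X : Type} (T : X -> X) (x y : X) : Prop :=
  exists n : nat, y = Nat.iter n T x \/ x = Nat.iter n T y.

Definition minimal {X : Type} (d : X -> X -> R) (T : X -> X) : Prop :=
  forall x z eps, eps > 0 -> exists y, in_orbit T x y /\ d z y < eps.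

Definition minimal_cantor_system {X : Type} (d : X -> X -> R) (T : X -> X) : Prop :=
  cantor_space d /\ homeomorphism d T /\ minimal d T.

(* T^{-j} A = preimage of A under T^j *)
Definition preim_iter {X : Type} (T : X -> X) (j : nat) (A : X -> Prop) : X -> Prop :=
  fun x => A (Nat.iter j T x).

(* atom (k,j) of P(n): T^{-j} B_k(n), for 1 <= k <= C n, 0 <= j < h n k *)
Definition is_atom_index (C : nat -> nat) (h : nat -> nat -> nat) (n k j : nat) : Prop :=
  (1 <= k <= C n)%nat /\ (j < h n k)%nat.

Definition atom {X : Type} (T : X -> X) (B : nat -> nat -> X -> Prop)
  (n k j : nat) : X -> Prop := preim_iter T j (B n k).

Definition roof {X : Type} (C : nat -> nat) (B : nat -> nat -> X -> Prop) (n : nat) : X -> Prop :=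
  fun x => exists k, (1 <= k <= C n)%nat /\ B n k x.

Definition subset {X : Type} (A A' : X -> Prop) : Prop := forall x, A x -> A' x.

Definition CKR_partition {X : Type} (d : X -> X -> R) (T : X -> X)
  (C : nat -> nat) (h : nat -> nat -> nat) (B : nat -> nat -> X -> Prop) (n : nat) : Prop :=
  (forall k, (1 <= k <= C n)%nat ->
     is_clopen d (B n k) /\ (exists x, B n k x) /\ (1 <= h n k)%nat) /\
  (forall x, exists k j, is_atom_index C h n k j /\ atom T B n k j x) /\
  (forall x k j k' j', is_atom_index C h n k j -> is_atom_index C h n k' j' ->
     atom T B n k j x -> atom T B n k' j' x -> k = k' /\ j = j').

Definition CKR_sequence {X : Type} (d : X -> X -> R) (T : X -> X)
  (C : nat -> nat) (h : nat -> nat -> nat) (B : nat -> nat -> X -> Prop) : Prop :=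
  (forall n, CKR_partition d T C h B n) /\
  (C 0%nat = 1%nat /\ h 0%nat 1%nat = 1%nat /\ forall x, B 0%nat 1%nat x) /\
  (* KR1 *)
  (forall n, subset (roof C B (S n)) (roof C B n)) /\
  (* KR2 *)
  (forall n k j, is_atom_index C h (S n) k j ->
     exists k' j', is_atom_index C h n k' j' /\
       subset (atom T B (S n) k j) (atom T B n k' j')) /\
  (* KR3 *)
  (exists x0, forall y, (forall n, roof C B n y) <-> y = x0) /\
  (* KR4: the atoms of all P(n) form a base of the topology *)
  (forall x eps, eps > 0 -> exists n k j, is_atom_index C h n k j /\
     atom T B n k j x /\ subset (atom T B n k j) (fun y => d x y < eps)) /\
  (* KR5 *)
  (forall n k l, (1 <= n)%nat -> (1 <= k <= C (n - 1))%nat -> (1 <= l <= C n)%nat ->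
     exists j, (j < h n l)%nat /\ subset (atom T B n l j) (B (n - 1)%nat k)) /\
  (* KR6 *)
  (forall n, (1 <= n)%nat -> subset (roof C B n) (B (n - 1)%nat 1%nat)).

Definition Cx_dist (a b : Cx) : R := Cx_norm (Cx_sub a b).

Definition continuous_eigenvalue {X : Type} (d : X -> X -> R) (T : X -> X) (lam : Cx) : Prop :=
  exists f : X -> Cx, continuous_map d Cx_dist f /\ (exists x, f x <> Cx0) /\
    forall x, f (T x) = Cx_mul lam (f x).

Definition max_h (C : nat -> nat) (h : nat -> nat -> nat) (n : nat) : nat :=
  fold_right Nat.max 0%nat (map (h n) (seq 1 (C n))).
Definition min_h (C : nat -> nat) (h : nat -> nat -> nat) (n : nat) : nat :=
  fold_right Nat.min (h n 1%nat) (map (h n) (seq 1 (C n))).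
Definition max_defect (C : nat -> nat) (h : nat -> nat -> nat) (lam : Cx) (n : nat) : R :=
  fold_right Rmax 0 (map (fun k => Cx_norm (Cx_sub (Cx_pow lam (h n k)) Cx1)) (seq 1 (C n))).

(* m-th term of the series, m >= 1 *)
Definition series_term (C : nat -> nat) (h : nat -> nat -> nat) (lam : Cx) (m : nat) : R :=
  INR (max_h C h (S m)) / INR (min_h C h m) * max_defect C h lam m.

(* The basic tool is the entry time of x into the roof B(n), i.e. the level of
   the atom of P(n) containing x.  Since B(n+1) is contained in B(n), the path
   from x to B(n+1) first enters B(n) and then runs through a number c of full
   towers of P(n); this bounds both its length (>= c min_k h_k(n)) and, by the
   subadditivity of m |-> |lam^m - 1| on the unit circle, its defect.

   (1) Necessity: for x in B_k(n) the point y = T^(-h_k(n)) x is again in B(n),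
       and f x = lam^(h_k(n)) f y.  The roofs shrink to the point x0 of (KR3)
       by compactness, so f x and f y are close to f x0, which is nonzero by
       minimality; hence lam^(h_k(n)) is close to 1.
   (2) Sufficiency: f_n = lam^(-entry time into B(n)) is locally constant and
       satisfies the eigen-equation off B(n); consecutive f_n differ by at most
       the n-th term of the series, so f_n converges uniformly to a continuous
       unimodular f with f o T = lam f off x0, and at x0 by continuity since
       X has no isolated points. *)
From Stdlib Require Import Reals Lra Lia List Psatz.
From Stdlib Require Import ClassicalEpsilon Classical.
Open Scope R_scope.

Lemma Cx_ext a b : Cre a = Cre b -> Cim a = Cim b -> a = b.
Proof. destruct a, b; simpl; intros; subst; reflexivity. Qed.

Lemma Cx_norm_nonneg a : 0 <= Cx_norm a.
Proof. apply sqrt_pos. Qed.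

Lemma Cx_norm_triangle a b : Cx_norm (Cx_add a b) <= Cx_norm a + Cx_norm b.
Proof.
  destruct a as [a1 a2], b as [b1 b2]; unfold Cx_norm, Cx_add; simpl.
  assert (Ha : 0 <= a1*a1 + a2*a2) by nra.
  assert (Hb : 0 <= b1*b1 + b2*b2) by nra.
  pose proof (sqrt_pos (a1*a1 + a2*a2)); pose proof (sqrt_pos (b1*b1 + b2*b2)).
  pose proof (sqrt_sqrt _ Ha); pose proof (sqrt_sqrt _ Hb).
  set (s := sqrt (a1*a1 + a2*a2)) in *; set (t := sqrt (b1*b1 + b2*b2)) in *.
  rewrite <- (sqrt_square (s + t)) by lra.
  apply sqrt_le_1_alt.
  (* Cauchy-Schwarz: a.b <= |a| |b| *)
  assert (0 <= s*t) by nra.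
  assert (Hcs : (a1*b1 + a2*b2) * (a1*b1 + a2*b2) <= (s*t) * (s*t)).
  { assert (Hst : (s*t) * (s*t) = (a1*a1 + a2*a2) * (b1*b1 + b2*b2)) by nra.
    rewrite Hst. pose proof (Rle_0_sqr (a1*b2 - a2*b1)) as Hsq; unfold Rsqr in Hsq; nra. }
  assert (a1*b1 + a2*b2 <= s*t) by nra.
  nra.
Qed.

Lemma Cx_norm_mul a b : Cx_norm (Cx_mul a b) = Cx_norm a * Cx_norm b.
Proof.
  destruct a as [a1 a2], b as [b1 b2]; unfold Cx_norm, Cx_mul; simpl.
  rewrite <- sqrt_mult by nra. f_equal. ring.
Qed.

Lemma Cx_norm_eq0 a : Cx_norm a = 0 -> a = Cx0.
Proof.
  destruct a as [a1 a2]; unfold Cx_norm; simpl; intro H.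
  apply sqrt_eq_0 in H; [|nra].
  apply Cx_ext; simpl; nra.
Qed.

Lemma Cx_norm_Cx0 : Cx_norm Cx0 = 0.
Proof. unfold Cx_norm; simpl. rewrite Rmult_0_l, Rplus_0_l. apply sqrt_0. Qed.

Lemma Cx_norm_Cx1 : Cx_norm Cx1 = 1.
Proof. unfold Cx_norm; simpl. replace (1*1 + 0*0) with 1 by ring. apply sqrt_1. Qed.

(* The norm dominates both coordinates and is at most twice their maximum;
   this reduces completeness of C to that of R. *)
Lemma Cx_norm_coords a : Rabs (Cre a) <= Cx_norm a /\ Rabs (Cim a) <= Cx_norm a.
Proof.
  destruct a as [a1 a2]; unfold Cx_norm; simpl.
  split; rewrite <- sqrt_Rsqr_abs; apply sqrt_le_1_alt; unfold Rsqr; nra.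
Qed.

Lemma Cx_norm_le_coords a e :
  Rabs (Cre a) <= e -> Rabs (Cim a) <= e -> Cx_norm a <= 2 * e.
Proof.
  destruct a as [a1 a2]; unfold Cx_norm; simpl; intros H1 H2.
  assert (-e <= a1 <= e /\ -e <= a2 <= e) as [Ha1 Ha2]
    by (revert H1 H2; unfold Rabs; repeat destruct Rcase_abs; lra).
  rewrite <- (sqrt_square (2 * e)) by lra. apply sqrt_le_1_alt. nra.
Qed.

Lemma Cx_mul_assoc a b c : Cx_mul a (Cx_mul b c) = Cx_mul (Cx_mul a b) c.
Proof. apply Cx_ext; simpl; ring. Qed.

Lemma Cx_pow_add a m n : Cx_pow a (m + n) = Cx_mul (Cx_pow a m) (Cx_pow a n).
Proof.
  induction m as [|m IH]; simpl.
  - apply Cx_ext; simpl; ring.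
  - rewrite IH, Cx_mul_assoc. reflexivity.
Qed.

Lemma Cx_norm_pow_unit a n : Cx_norm a = 1 -> Cx_norm (Cx_pow a n) = 1.
Proof.
  intro Ha; induction n as [|n IH]; simpl; [apply Cx_norm_Cx1|].
  rewrite Cx_norm_mul, Ha, IH; ring.
Qed.

(* On the unit circle the conjugate is the inverse. *)
Definition Cx_conj (a : Cx) : Cx := mkCx (Cre a) (- Cim a).

Lemma Cx_norm_conj a : Cx_norm (Cx_conj a) = Cx_norm a.
Proof. unfold Cx_norm, Cx_conj; simpl. f_equal. ring. Qed.

Lemma Cx_conj_pow a n : Cx_pow (Cx_conj a) n = Cx_conj (Cx_pow a n).
Proof.
  induction n as [|n IH]; simpl; [apply Cx_ext; simpl; ring|].
  rewrite IH. apply Cx_ext; simpl; ring.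
Qed.

Lemma Cx_mul_conj_unit a : Cx_norm a = 1 -> Cx_mul a (Cx_conj a) = Cx1.
Proof.
  unfold Cx_norm; intro Ha.
  assert (Hsq : Cre a * Cre a + Cim a * Cim a = 1).
  { rewrite <- (sqrt_sqrt (Cre a * Cre a + Cim a * Cim a)) by nra. rewrite Ha. ring. }
  apply Cx_ext; simpl; lra.
Qed.

Lemma Cx_dist_sym a b : Cx_dist a b = Cx_dist b a.
Proof. unfold Cx_dist, Cx_norm, Cx_sub; simpl. f_equal. ring. Qed.

Lemma Cx_dist_triangle a b c : Cx_dist a c <= Cx_dist a b + Cx_dist b c.
Proof.
  unfold Cx_dist. replace (Cx_sub a c) with (Cx_add (Cx_sub a b) (Cx_sub b c))
    by (apply Cx_ext; simpl; ring). apply Cx_norm_triangle.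
Qed.

Lemma Cx_dist_mul_l a u v : Cx_dist (Cx_mul a u) (Cx_mul a v) = Cx_norm a * Cx_dist u v.
Proof.
  unfold Cx_dist. rewrite <- Cx_norm_mul. f_equal. apply Cx_ext; simpl; ring.
Qed.

Lemma Cx_dist_0_r a : Cx_dist a Cx0 = Cx_norm a.
Proof. unfold Cx_dist. f_equal. apply Cx_ext; simpl; ring. Qed.

Lemma Cx_eq_of_close a b :
  (forall eps, eps > 0 -> exists z, Cx_dist z a <= eps /\ Cx_dist z b <= eps) -> a = b.
Proof.
  intro Hclose.
  assert (Hab : Cx_dist a b = 0).
  { apply Rle_antisym; [|apply Cx_norm_nonneg]. apply Rnot_lt_le; intro Hpos.
    destruct (Hclose (Cx_dist a b / 3)) as [z [Hza Hzb]]; [lra|].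
    pose proof (Cx_dist_triangle a z b). rewrite Cx_dist_sym in Hza. lra. }
  apply Cx_norm_eq0 in Hab.
  apply Cx_ext; [apply (f_equal Cre) in Hab | apply (f_equal Cim) in Hab];
    simpl in Hab; lra.
Qed.

Definition defect (a : Cx) (m : nat) : R := Cx_norm (Cx_sub (Cx_pow a m) Cx1).

Lemma defect_0 a : defect a 0 = 0.
Proof.
  unfold defect; simpl. replace (Cx_sub Cx1 Cx1) with Cx0 by (apply Cx_ext; simpl; ring).
  apply Cx_norm_Cx0.
Qed.

Lemma defect_add a m n : Cx_norm a = 1 -> defect a (m + n) <= defect a m + defect a n.
Proof.
  intro Ha. unfold defect. rewrite Cx_pow_add.
  replace (Cx_sub (Cx_mul (Cx_pow a m) (Cx_pow a n)) Cx1) with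
    (Cx_add (Cx_mul (Cx_pow a m) (Cx_sub (Cx_pow a n) Cx1)) (Cx_sub (Cx_pow a m) Cx1))
    by (apply Cx_ext; simpl; ring).
  eapply Rle_trans; [apply Cx_norm_triangle|].
  rewrite Cx_norm_mul, Cx_norm_pow_unit by exact Ha. lra.
Qed.

Lemma dist_conj_pow a u r : Cx_norm a = 1 -> Cx_norm u = 1 ->
  Cx_dist (Cx_mul u (Cx_pow (Cx_conj a) r)) u = defect a r.
Proof.
  intros Ha Hu.
  replace u with (Cx_mul u Cx1) at 2 by (apply Cx_ext; simpl; ring).
  rewrite Cx_dist_mul_l, Hu, Rmult_1_l, Cx_conj_pow.
  unfold Cx_dist, defect. rewrite <- Cx_norm_conj. f_equal. apply Cx_ext; simpl; ring.
Qed.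

(* If w is not zero and u = mu v with u, v both close to w (relative to |w|),
   then mu is close to 1: |mu - 1| |v| = |u - v| is small while |v| is not. *)
Lemma Cx_factor_near_one (mu u v w : Cx) eps :
  eps > 0 -> Cx_norm w > 0 -> u = Cx_mul mu v ->
  Cx_dist w u < Cx_norm w * eps / (2 + eps) -> Cx_dist w v < Cx_norm w * eps / (2 + eps) ->
  Cx_dist mu Cx1 < eps.
Proof.
  intros Heps Hw Huv Hu Hv.
  set (c := Cx_norm w) in *. set (e := c * eps / (2 + eps)) in *.
  assert (Hce : c - e = 2 * c / (2 + eps)) by (unfold e; field; lra).
  assert (Hce_pos : 0 < c - e) by (rewrite Hce; apply Rdiv_lt_0_compat; lra).
  assert (H2e : 2 * e = eps * (c - e)) by (rewrite Hce; unfold e; field; lra).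
  assert (Hmul : Cx_dist mu Cx1 * Cx_norm v < 2 * e).
  { unfold Cx_dist at 1. rewrite <- Cx_norm_mul.
    replace (Cx_mul (Cx_sub mu Cx1) v) with (Cx_sub u v) by (subst u; apply Cx_ext; simpl; ring).
    pose proof (Cx_dist_triangle u w v). rewrite Cx_dist_sym in Hu. unfold Cx_dist in *. lra. }
  assert (Hv_large : c - e < Cx_norm v).
  { pose proof (Cx_dist_triangle w v Cx0) as Htri. rewrite !Cx_dist_0_r in Htri. unfold c. lra. }
  assert (Hlow : Cx_dist mu Cx1 * (c - e) <= Cx_dist mu Cx1 * Cx_norm v)
    by (apply Rmult_le_compat_l; [apply Cx_norm_nonneg | lra]).
  apply (Rmult_lt_reg_r (c - e)); lra.
Qed.

Lemma limit_le_of_eventually u L c eps N :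
  Un_cv u L -> (forall m, (m >= N)%nat -> Rabs (u m - c) <= eps) -> Rabs (L - c) <= eps.
Proof.
  intros Hu Hb. apply Rnot_lt_le; intro Hlt.
  destruct (Hu (Rabs (L - c) - eps)) as [N' HN']; [lra|].
  assert (H1 : Rabs (u (Nat.max N N') - L) < Rabs (L - c) - eps) by (apply HN'; lia).
  assert (H2 : Rabs (u (Nat.max N N') - c) <= eps) by (apply Hb; lia).
  revert H1 H2 Hlt. unfold Rabs; repeat destruct Rcase_abs; lra.
Qed.

Lemma Cx_complete (u : nat -> Cx) :
  (forall eps, eps > 0 -> exists N, forall n m, (n >= N)%nat -> (m >= N)%nat ->
     Cx_dist (u n) (u m) < eps) ->
  exists z, forall eps N, (forall n m, (n >= N)%nat -> (m >= N)%nat -> Cx_dist (u n) (u m) < eps) ->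
    forall n, (n >= N)%nat -> Cx_dist (u n) z <= 2 * eps.
Proof.
  intro Hcauchy.
  assert (Hre : Cauchy_crit (fun n => Cre (u n))).
  { intros eps Heps. destruct (Hcauchy eps Heps) as [N HN]. exists N; intros n m Hn Hm.
    eapply Rle_lt_trans; [apply (Cx_norm_coords (Cx_sub (u n) (u m)))|]. apply HN; auto. }
  assert (Him : Cauchy_crit (fun n => Cim (u n))).
  { intros eps Heps. destruct (Hcauchy eps Heps) as [N HN]. exists N; intros n m Hn Hm.
    eapply Rle_lt_trans; [apply (Cx_norm_coords (Cx_sub (u n) (u m)))|]. apply HN; auto. }
  destruct (R_complete _ Hre) as [l1 H1], (R_complete _ Him) as [l2 H2].
  exists (mkCx l1 l2). intros eps N HN n Hn.
  apply Cx_norm_le_coords; simpl.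
  - rewrite Rabs_minus_sym. apply (limit_le_of_eventually _ _ _ _ N H1). intros m Hm.
    left. eapply Rle_lt_trans; [apply (Cx_norm_coords (Cx_sub (u m) (u n)))|]. apply HN; auto.
  - rewrite Rabs_minus_sym. apply (limit_le_of_eventually _ _ _ _ N H2). intros m Hm.
    left. eapply Rle_lt_trans; [apply (Cx_norm_coords (Cx_sub (u m) (u n)))|]. apply HN; auto.
Qed.

Lemma uniform_limit {X : Type} (g : nat -> X -> Cx) :
  (forall eps, eps > 0 -> exists N, forall n m x, (n >= N)%nat -> (m >= N)%nat ->
     Cx_dist (g n x) (g m x) < eps) ->
  exists f : X -> Cx, forall eps, eps > 0 ->
    exists N, forall n x, (n >= N)%nat -> Cx_dist (g n x) (f x) <= eps.
Proof.
  intro Hcauchy.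
  assert (Hlim : forall x, exists z, forall eps N,
    (forall n m, (n >= N)%nat -> (m >= N)%nat -> Cx_dist (g n x) (g m x) < eps) ->
    forall n, (n >= N)%nat -> Cx_dist (g n x) z <= 2 * eps).
  { intro x. apply Cx_complete. intros eps Heps.
    destruct (Hcauchy eps Heps) as [N HN]. exists N; auto. }
  exists (fun x => proj1_sig (constructive_indefinite_description _ (Hlim x))).
  intros eps Heps. destruct (Hcauchy (eps / 2)) as [N HN]; [lra|].
  exists N. intros n x Hn.
  replace eps with (2 * (eps / 2)) by field.
  apply (proj2_sig (constructive_indefinite_description _ (Hlim x)) _ N); auto.
Qed.

Fixpoint partial_sum (a : nat -> R) (k : nat) : R :=
  match k with O => 0 | S k' => partial_sum a k' + a k' end.

(* The standard sum_f_R0 a M adds the first M + 1 terms. *)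
Lemma partial_sum_S a M : partial_sum a (S M) = sum_f_R0 a M.
Proof. induction M as [|M IH]; simpl in *; [lra|]. rewrite <- IH. reflexivity. Qed.

Lemma telescope_bound (u : nat -> Cx) (a : nat -> R) :
  (forall i, Cx_dist (u (S i)) (u i) <= a i) ->
  forall n p, Cx_dist (u (n + p)%nat) (u n) <= partial_sum a (n + p) - partial_sum a n.
Proof.
  intros Hinc n p. induction p as [|p IH].
  - rewrite Nat.add_0_r. unfold Cx_dist.
    replace (Cx_sub (u n) (u n)) with Cx0 by (apply Cx_ext; simpl; ring).
    rewrite Cx_norm_Cx0. lra.
  - rewrite Nat.add_succ_r; simpl partial_sum.
    pose proof (Cx_dist_triangle (u (S (n + p))) (u (n + p)%nat) (u n)).
    specialize (Hinc (n + p)%nat). lra.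
Qed.

Lemma summable_increments_cauchy {X : Type} (g : nat -> X -> Cx) (a : nat -> R) :
  (forall i x, Cx_dist (g (S i) x) (g i x) <= a i) ->
  (exists l, Un_cv (fun M => sum_f_R0 a M) l) ->
  forall eps, eps > 0 -> exists N, forall n m x, (n >= N)%nat -> (m >= N)%nat ->
    Cx_dist (g n x) (g m x) < eps.
Proof.
  intros Hinc [l Hl] eps Heps.
  destruct (Hl (eps / 2)) as [N HN]; [lra|].
  assert (Htail : forall n p x, (n >= S N)%nat -> Cx_dist (g (n + p)%nat x) (g n x) < eps).
  { intros n p x Hn.
    eapply Rle_lt_trans; [apply (telescope_bound (fun i => g i x) a (fun i => Hinc i x))|].
    destruct n as [|n]; [lia|].
    replace (S n + p)%nat with (S (n + p)) by lia. rewrite !partial_sum_S.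
    assert (H1 := HN (n + p)%nat ltac:(lia)). assert (H2 := HN n ltac:(lia)).
    unfold Rdist in *. revert H1 H2. unfold Rabs; repeat destruct Rcase_abs; lra. }
  exists (S N). intros n m x Hn Hm.
  destruct (Nat.le_ge_cases n m) as [Hnm|Hnm].
  - replace m with (n + (m - n))%nat by lia. rewrite Cx_dist_sym. apply Htail; lia.
  - replace n with (m + (n - m))%nat by lia. apply Htail; lia.
Qed.

Section MetricSpaces.
Variables (X : Type) (d : X -> X -> R).

Lemma continuous_iter (T : X -> X) j :
  continuous_map d d T -> continuous_map d d (fun x => Nat.iter j T x).
Proof.
  intro HT. induction j as [|j IH]; intros x eps Heps; simpl.
  - exists eps. split; auto.
  - destruct (HT (Nat.iter j T x) eps Heps) as [d1 [Hd1 H1]].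
    destruct (IH x d1 Hd1) as [d2 [Hd2 H2]].
    exists d2. split; auto.
Qed.

Lemma continuous_comp (T : X -> X) (f : X -> Cx) :
  continuous_map d d T -> continuous_map d Cx_dist f -> continuous_map d Cx_dist (fun x => f (T x)).
Proof.
  intros HT Hf x eps Heps.
  destruct (Hf (T x) eps Heps) as [d1 [Hd1 H1]].
  destruct (HT x d1 Hd1) as [d2 [Hd2 H2]].
  exists d2. split; auto.
Qed.

Lemma continuous_mul_l (a : Cx) (f : X -> Cx) :
  continuous_map d Cx_dist f -> continuous_map d Cx_dist (fun x => Cx_mul a (f x)).
Proof.
  intros Hf x eps Heps.
  assert (Hpos : 0 < Cx_norm a + 1) by (pose proof (Cx_norm_nonneg a); lra).
  destruct (Hf x (eps / (Cx_norm a + 1))) as [delta [Hd Hclose]].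
  { apply Rdiv_lt_0_compat; lra. }
  exists delta. split; auto. intros y Hy.
  rewrite Cx_dist_mul_l. specialize (Hclose y Hy).
  apply Rle_lt_trans with ((Cx_norm a + 1) * Cx_dist (f x) (f y)).
  - pose proof (Cx_norm_nonneg (Cx_sub (f x) (f y))). unfold Cx_dist in *. nra.
  - replace eps with ((Cx_norm a + 1) * (eps / (Cx_norm a + 1))) by (field; lra).
    apply Rmult_lt_compat_l; auto.
Qed.

Lemma uniform_limit_locally_constant (g : nat -> X -> Cx) (f : X -> Cx) :
  (forall n x, exists delta, delta > 0 /\ forall y, d x y < delta -> g n y = g n x) ->
  (forall eps, eps > 0 -> exists N, forall n x, (n >= N)%nat -> Cx_dist (g n x) (f x) <= eps) ->
  continuous_map d Cx_dist f.
Proof.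
  intros Hloc Hunif x eps Heps.
  destruct (Hunif (eps / 3)) as [N HN]; [lra|].
  destruct (Hloc N x) as [delta [Hd Hconst]].
  exists delta. split; auto. intros y Hy.
  pose proof (HN N x (le_n N)) as Hx. pose proof (HN N y (le_n N)) as Hy'.
  rewrite (Hconst y Hy) in Hy'.
  pose proof (Cx_dist_triangle (f x) (g N x) (f y)). rewrite Cx_dist_sym in Hx. lra.
Qed.

Lemma continuous_agree_at_limit_point (F G : X -> Cx) x0 :
  no_isolated_points d -> continuous_map d Cx_dist F -> continuous_map d Cx_dist G ->
  (forall y, y <> x0 -> F y = G y) -> F x0 = G x0.
Proof.
  intros Hperf HF HG Hagree. apply Cx_eq_of_close. intros eps Heps.
  destruct (HF x0 eps Heps) as [d1 [Hd1 H1]].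
  destruct (HG x0 eps Heps) as [d2 [Hd2 H2]].
  destruct (Hperf x0 (Rmin d1 d2)) as [y [Hyx Hy]]; [apply Rmin_pos; auto|].
  exists (F y). split.
  - rewrite Cx_dist_sym. left. apply H1. eapply Rlt_le_trans; [exact Hy | apply Rmin_l].
  - rewrite (Hagree y Hyx), Cx_dist_sym. left. apply H2.
    eapply Rlt_le_trans; [exact Hy | apply Rmin_r].
Qed.

Lemma union_closed (A : nat -> X -> Prop) K :
  (forall k, (1 <= k <= K)%nat -> is_closed d (A k)) ->
  is_closed d (fun x => exists k, (1 <= k <= K)%nat /\ A k x).
Proof.
  induction K as [|K IH]; intros Hclosed x Hx.
  - exists 1. split; [lra|]. intros y _ [k [Hk _]]. lia.
  - destruct (IH (fun k Hk => Hclosed k ltac:(lia)) x) as [e1 [He1 H1]].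
    { intros [k [Hk Ha]]. apply Hx. exists k. split; auto; lia. }
    destruct (Hclosed (S K) ltac:(lia) x) as [e2 [He2 H2]].
    { intro Ha. apply Hx. exists (S K). split; auto; lia. }
    exists (Rmin e1 e2). split; [apply Rmin_pos; auto|].
    intros y Hy [k [Hk Ha]].
    destruct (Nat.eq_dec k (S K)) as [-> | Hne].
    + apply (H2 y); auto. eapply Rlt_le_trans; [exact Hy | apply Rmin_r].
    + apply (H1 y); [eapply Rlt_le_trans; [exact Hy | apply Rmin_l]|].
      exists k. split; auto. lia.
Qed.

Lemma closed_contains_limit (A : X -> Prop) (u : nat -> X) l N :
  is_metric d -> is_closed d A -> (forall n, (n >= N)%nat -> A (u n)) ->
  seq_converges d u l -> A l.
Proof.
  intros [_ [_ [Hsym _]]] Hclosed Hu Hcv. apply NNPP. intro Hl.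
  destruct (Hclosed l Hl) as [eps [Heps Hball]].
  destruct (Hcv eps Heps) as [N' HN'].
  apply (Hball (u (Nat.max N N'))).
  - rewrite Hsym. apply HN'. lia.
  - apply Hu. lia.
Qed.

End MetricSpaces.

Lemma fold_max_ge a l : In a l -> (a <= fold_right Nat.max 0 l)%nat.
Proof. induction l; simpl; [tauto|]. intros [->|H]; [lia|]. specialize (IHl H); lia. Qed.

Lemma fold_min_le a i l : In a l -> (fold_right Nat.min i l <= a)%nat.
Proof. induction l; simpl; [tauto|]. intros [->|H]; [lia|]. specialize (IHl H); lia. Qed.

Lemma fold_min_ge b i l :
  (b <= i)%nat -> (forall a, In a l -> (b <= a)%nat) -> (b <= fold_right Nat.min i l)%nat.
Proof.
  induction l as [|a l IH]; simpl; auto. intros Hi Hl.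
  assert (b <= a)%nat by auto. assert (b <= fold_right Nat.min i l)%nat by auto. lia.
Qed.

Lemma fold_Rmax_ge a l : In a l -> a <= fold_right Rmax 0 l.
Proof.
  induction l; simpl; [tauto|]. intros [->|H]; [apply Rmax_l|].
  eapply Rle_trans; [apply IHl; auto | apply Rmax_r].
Qed.

Lemma fold_Rmax_nonneg l : 0 <= fold_right Rmax 0 l.
Proof. induction l; simpl; [lra|]. eapply Rle_trans; [apply IHl | apply Rmax_r]. Qed.

Lemma h_le_max_h C h n k : (1 <= k <= C n)%nat -> (h n k <= max_h C h n)%nat.
Proof. intro Hk. apply fold_max_ge, in_map, in_seq. lia. Qed.

Lemma min_h_le_h C h n k : (1 <= k <= C n)%nat -> (min_h C h n <= h n k)%nat.
Proof. intro Hk. apply fold_min_le, in_map, in_seq. lia. Qed.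

Lemma min_h_pos C h n :
  (1 <= C n)%nat -> (forall k, (1 <= k <= C n)%nat -> (1 <= h n k)%nat) -> (1 <= min_h C h n)%nat.
Proof.
  intros HC Hh. apply fold_min_ge; [apply Hh; lia|].
  intros a Ha. apply in_map_iff in Ha. destruct Ha as [k [<- Hk]].
  apply in_seq in Hk. apply Hh. lia.
Qed.

Lemma defect_le_max_defect C h lam n k :
  (1 <= k <= C n)%nat -> defect lam (h n k) <= max_defect C h lam n.
Proof.
  intro Hk. apply fold_Rmax_ge.
  apply (in_map (fun k => Cx_norm (Cx_sub (Cx_pow lam (h n k)) Cx1))), in_seq. lia.
Qed.

Lemma max_defect_nonneg C h lam n : 0 <= max_defect C h lam n.
Proof. apply fold_Rmax_nonneg. Qed.

Section Towers.
Variables (X : Type) (d : X -> X -> R) (T : X -> X)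
  (C : nat -> nat) (h : nat -> nat -> nat) (B : nat -> nat -> X -> Prop).

Lemma atom_shift n k j i x :
  atom T B n k j x -> (i <= j)%nat -> atom T B n k (j - i) (Nat.iter i T x).
Proof.
  unfold atom, preim_iter. intros Hx Hi. rewrite <- Nat.iter_add.
  replace (j - i + i)%nat with j by lia. exact Hx.
Qed.

(* The entry time of x into the roof B(n): the level j of the atom of P(n) containing x. *)
Definition entry_time (n : nat) (x : X) : nat :=
  epsilon (inhabits 0%nat) (fun j => exists k, is_atom_index C h n k j /\ atom T B n k j x).

Section OneLevel.
Variable n : nat.
Hypothesis HP : CKR_partition d T C h B n.

Lemma atom_not_roof k j x :
  is_atom_index C h n k j -> (1 <= j)%nat -> atom T B n k j x -> ~ roof C B n x.
Proof.
  destruct HP as [Hbase [_ Huniq]]. intros Hidx Hj Hx [k' [Hk' Hroof]].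
  destruct (Hbase k' Hk') as [_ [_ Hh]].
  assert (Hidx0 : is_atom_index C h n k' 0) by (split; [exact Hk' | lia]).
  destruct (Huniq x k j k' 0%nat Hidx Hidx0 Hx Hroof). lia.
Qed.

Lemma entry_time_spec x :
  exists k, is_atom_index C h n k (entry_time n x) /\ atom T B n k (entry_time n x) x.
Proof.
  destruct HP as [_ [Hcover _]]. unfold entry_time. apply epsilon_spec.
  destruct (Hcover x) as [k [j Hx]]. exists j, k. exact Hx.
Qed.

Lemma entry_time_roof x : roof C B n (Nat.iter (entry_time n x) T x).
Proof. destruct (entry_time_spec x) as [k [[Hk _] Hx]]. exists k. split; auto. Qed.

Lemma not_roof_before_entry x i : (i < entry_time n x)%nat -> ~ roof C B n (Nat.iter i T x).
Proof.
  intro Hi. destruct (entry_time_spec x) as [k [[Hk Hj] Hx]].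
  apply (atom_not_roof k (entry_time n x - i)); [split; auto; lia | lia |].
  apply atom_shift; auto; lia.
Qed.

Lemma entry_time_first x j :
  roof C B n (Nat.iter j T x) -> (forall i, (i < j)%nat -> ~ roof C B n (Nat.iter i T x)) ->
  entry_time n x = j.
Proof.
  intros Hroof Hbefore.
  destruct (Nat.lt_total j (entry_time n x)) as [Hlt | [Heq | Hlt]]; auto; exfalso.
  - exact (not_roof_before_entry x j Hlt Hroof).
  - exact (Hbefore _ Hlt (entry_time_roof x)).
Qed.

Lemma entry_time_atom k j x :
  is_atom_index C h n k j -> atom T B n k j x -> entry_time n x = j.
Proof.
  intros Hidx Hx. apply entry_time_first.
  - exists k. split; [apply Hidx | exact Hx].
  - intros i Hi. apply (atom_not_roof k (j - i)); [destruct Hidx; split; auto; lia | lia |].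
    apply atom_shift; auto; lia.
Qed.

Lemma entry_time_lt_height x :
  exists k, (1 <= k <= C n)%nat /\ (entry_time n x < h n k)%nat.
Proof. destruct (entry_time_spec x) as [k [[Hk Hj] _]]. eauto. Qed.

Lemma entry_time_skip x t :
  (forall i, (i < t)%nat -> ~ roof C B n (Nat.iter i T x)) ->
  entry_time n x = (t + entry_time n (Nat.iter t T x))%nat.
Proof.
  intro Havoid. apply entry_time_first.
  - rewrite Nat.add_comm, Nat.iter_add. apply entry_time_roof.
  - intros i Hi. destruct (Nat.lt_ge_cases i t) as [Hit | Hit]; [auto|].
    replace i with (i - t + t)%nat by lia. rewrite Nat.iter_add.
    apply not_roof_before_entry. lia.
Qed.

Lemma return_to_roof y :
  roof C B n y ->
  exists k, (1 <= k <= C n)%nat /\ roof C B n (Nat.iter (h n k) T y) /\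
    forall i, (1 <= i < h n k)%nat -> ~ roof C B n (Nat.iter i T y).
Proof.
  intro Hy. destruct (entry_time_spec (T y)) as [k [[Hk Hj] Hx]].
  set (j := entry_time n (T y)) in *.
  assert (Hheight : h n k = S j).
  { destruct (Nat.eq_dec (h n k) (S j)) as [E | E]; auto. exfalso.
    apply (atom_not_roof k (S j) y); [split; auto; lia | lia | | exact Hy].
    unfold atom, preim_iter in *. rewrite Nat.iter_succ_r. exact Hx. }
  exists k. split; [exact Hk | split].
  - rewrite Hheight, Nat.iter_succ_r. apply entry_time_roof.
  - intros i Hi. replace i with (S (i - 1)) by lia. rewrite Nat.iter_succ_r.
    apply not_roof_before_entry. lia.
Qed.

(* Atoms are open, so the entry time is locally constant. *)
Lemma entry_time_locally_constant :
  continuous_map d d T ->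
  forall x, exists delta, delta > 0 /\ forall y, d x y < delta -> entry_time n y = entry_time n x.
Proof.
  intros HT x. destruct (entry_time_spec x) as [k [Hidx Hx]].
  set (j := entry_time n x) in *.
  destruct HP as [Hbase _]. destruct (Hbase k (proj1 Hidx)) as [[Hopen _] _].
  destruct (Hopen _ Hx) as [eps [Heps Hball]].
  destruct (continuous_iter X d T j HT x eps Heps) as [delta [Hd Hnear]].
  exists delta. split; auto. intros y Hy.
  apply (entry_time_atom k); auto. unfold atom, preim_iter. apply Hball, Hnear, Hy.
Qed.

End OneLevel.

Section TwoLevels.
Variable n : nat.
Hypotheses (HP : CKR_partition d T C h B n) (HP1 : CKR_partition d T C h B (S n))
  (Hnested : subset (roof C B (S n)) (roof C B n)).

(* Entering B(n+1) means first entering B(n), then travelling from B(n) to B(n+1). *)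
Lemma entry_time_split x :
  entry_time (S n) x = (entry_time n x + entry_time (S n) (Nat.iter (entry_time n x) T x))%nat.
Proof.
  apply entry_time_skip; auto. intros i Hi Hroof.
  exact (not_roof_before_entry n HP x i Hi (Hnested _ Hroof)).
Qed.

(* The path from a point of B(n) to B(n+1) is a concatenation of c full towers
   of P(n): its length is at least c * min_h(n) and its defect at most c * max_defect(n). *)
Lemma travel_defect lam y :
  Cx_norm lam = 1 -> roof C B n y ->
  exists c, (c * min_h C h n <= entry_time (S n) y)%nat /\
    defect lam (entry_time (S n) y) <= INR c * max_defect C h lam n.
Proof.
  intros Hlam. remember (entry_time (S n) y) as m eqn:Hm. revert y Hm.
  induction m as [m IH] using (well_founded_induction Wf_nat.lt_wf). intros y Hm Hy.
  destruct m as [|m'].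
  - exists 0%nat. split; [lia|]. rewrite defect_0. simpl. lra.
  - assert (Hy1 : ~ roof C B (S n) y).
    { intro Hroof.
      assert (entry_time (S n) y = 0%nat) by (apply entry_time_first; auto; intros; lia).
      lia. }
    destruct (return_to_roof n HP y Hy) as [k [Hk [Hz Havoid]]].
    assert (Hsplit : entry_time (S n) y = (h n k + entry_time (S n) (Nat.iter (h n k) T y))%nat).
    { apply entry_time_skip; auto. intros i Hi.
      destruct (Nat.eq_dec i 0) as [-> | Hi0]; [exact Hy1|].
      intro Hroof. apply (Havoid i); [lia | exact (Hnested _ Hroof)]. }
    destruct (IH (entry_time (S n) (Nat.iter (h n k) T y))) with (y := Nat.iter (h n k) T y)
      as [c [Hlen Hdef]]; auto.
    { destruct HP as [Hbase _]. destruct (Hbase k Hk) as [_ [_ Hh]]. lia. }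
    exists (S c). rewrite Hm, Hsplit. split.
    + pose proof (min_h_le_h C h n k Hk). simpl. lia.
    + eapply Rle_trans; [apply defect_add; exact Hlam|].
      rewrite S_INR. pose proof (defect_le_max_defect C h lam n k Hk). lra.
Qed.

End TwoLevels.

Lemma levels_nonempty n :
  (exists x : X, True) -> CKR_partition d T C h B n -> (1 <= C n)%nat.
Proof.
  intros [x _] [_ [Hcover _]]. destruct (Hcover x) as [k [j [[Hk _] _]]]. lia.
Qed.

Lemma heights_pos n :
  CKR_partition d T C h B n -> forall k, (1 <= k <= C n)%nat -> (1 <= h n k)%nat.
Proof. intros [Hbase _] k Hk. apply (Hbase k Hk). Qed.

Lemma roof_antitone :
  (forall n, subset (roof C B (S n)) (roof C B n)) ->
  forall n m y, (n <= m)%nat -> roof C B m y -> roof C B n y.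
Proof.
  intros Hnested n m y Hnm. induction Hnm as [|m Hnm IH]; auto.
  intro Hm. apply IH, Hnested, Hm.
Qed.

Lemma eigenfunction_iter (f : X -> Cx) lam m x :
  (forall x, f (T x) = Cx_mul lam (f x)) -> f (Nat.iter m T x) = Cx_mul (Cx_pow lam m) (f x).
Proof.
  intro Hf. induction m as [|m IH]; simpl; [apply Cx_ext; simpl; ring|].
  rewrite Hf, IH, Cx_mul_assoc. reflexivity.
Qed.

(* By minimality the zero set of a continuous eigenfunction, being invariant and
   closed, is empty as soon as the eigenfunction is nonzero somewhere. *)
Lemma eigenfunction_nowhere_zero (f : X -> Cx) lam :
  Cx_norm lam = 1 -> minimal d T -> continuous_map d Cx_dist f ->
  (exists x, f x <> Cx0) -> (forall x, f (T x) = Cx_mul lam (f x)) ->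
  forall x0, f x0 <> Cx0.
Proof.
  intros Hlam Hmin Hcont [x1 Hx1] Hf x0 Hx0. apply Hx1.
  assert (Horbit : forall y, in_orbit T x0 y -> f y = Cx0).
  { intros y [m [-> | Hback]].
    - rewrite (eigenfunction_iter f lam), Hx0 by exact Hf. apply Cx_ext; simpl; ring.
    - rewrite Hback, (eigenfunction_iter f lam) in Hx0 by exact Hf. apply Cx_norm_eq0.
      apply (f_equal Cx_norm) in Hx0.
      rewrite Cx_norm_mul, Cx_norm_pow_unit, Cx_norm_Cx0 in Hx0 by exact Hlam. lra. }
  apply Cx_norm_eq0, Rle_antisym; [|apply Cx_norm_nonneg].
  apply Rnot_lt_le. intro Hpos.
  destruct (Hcont x1 (Cx_norm (f x1)) Hpos) as [delta [Hd Hnear]].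
  destruct (Hmin x0 x1 delta Hd) as [y [Hy Hdy]].
  specialize (Hnear y Hdy). rewrite (Horbit y Hy), Cx_dist_0_r in Hnear. lra.
Qed.

Lemma roof_closed n : CKR_partition d T C h B n -> is_closed d (roof C B n).
Proof. intros [Hbase _]. apply union_closed. intros k Hk. apply (Hbase k Hk). Qed.

Lemma roof_shrinks_to_point x0 :
  cantor_space d -> CKR_sequence d T C h B ->
  (forall y, (forall n, roof C B n y) <-> y = x0) ->
  forall delta, delta > 0 -> exists N, forall n y, (n >= N)%nat -> roof C B n y -> d x0 y < delta.
Proof.
  intros [Hmet [_ [Hcomp _]]] [HP [_ [Hnested _]]] Hx0 delta Hdelta.
  apply NNPP. intro Hfar.
  assert (Hwit : forall N, exists y, roof C B N y /\ d x0 y >= delta).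
  { intro N. apply NNPP. intro Hno. apply Hfar. exists N. intros n y Hn Hy.
    apply Rnot_le_lt. intro Hge. apply Hno. exists y.
    split; [exact (roof_antitone Hnested N n y Hn Hy) | lra]. }
  apply choice in Hwit. destruct Hwit as [u Hu].
  destruct (Hcomp u) as [phi [l [Hphi Hcv]]].
  assert (Hphi_ge : forall n, (n <= phi n)%nat).
  { intro n. induction n as [|n IH]; [lia|]. specialize (Hphi n). lia. }
  assert (Hl : forall m, roof C B m l).
  { intro m.
    apply (closed_contains_limit X d _ (fun n => u (phi n)) l m Hmet (roof_closed m (HP m)));
      auto.
    intros n Hn.
    apply (roof_antitone Hnested m (phi n)); [specialize (Hphi_ge n); lia | apply Hu]. }
  apply Hx0 in Hl. subst l.
  destruct (Hcv delta Hdelta) as [N HN]. specialize (HN N (le_n N)).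
  destruct Hmet as [_ [_ [Hsym _]]]. rewrite Hsym in HN.
  destruct (Hu (phi N)). lra.
Qed.

Lemma iter_inverse (Sv : X -> X) m x :
  (forall x, T (Sv x) = x) -> Nat.iter m T (Nat.iter m Sv x) = x.
Proof.
  intro HTS. induction m as [|m IH]; [reflexivity|].
  change (Nat.iter (S m) Sv x) with (Sv (Nat.iter m Sv x)). rewrite Nat.iter_succ_r, HTS. exact IH.
Qed.

(* Going back h_k(n) steps from the base B_k(n) lands in the roof: the orbit
   climbs the whole tower k in between. *)
Lemma roof_back_from_base (Sv : X -> X) n k x :
  CKR_partition d T C h B n -> (forall x, T (Sv x) = x) ->
  (1 <= k <= C n)%nat -> B n k x -> roof C B n (Nat.iter (h n k) Sv x).
Proof.
  intros HP HTS Hk Hx.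
  set (w := Nat.iter (h n k) Sv x).
  destruct (entry_time_spec n HP w) as [k' [Hidx Hw]].
  set (j := entry_time n w) in *.
  destruct (Nat.eq_dec j 0) as [Hj | Hj].
  - exists k'. split; [apply Hidx|]. unfold atom, preim_iter in Hw. rewrite Hj in Hw. exact Hw.
  - exfalso. pose proof (heights_pos n HP k Hk) as Hh.
    assert (HTw : T w = Nat.iter (h n k - 1) Sv x).
    { unfold w. destruct (h n k) as [|hk]; [lia|]. simpl. rewrite Nat.sub_0_r. apply HTS. }
    assert (Hatom' : atom T B n k' (j - 1) (T w)).
    { unfold atom, preim_iter in *. rewrite <- Nat.iter_succ_r.
      replace (S (j - 1)) with j by lia. exact Hw. }
    assert (Hatom : atom T B n k (h n k - 1) (T w)).
    { rewrite HTw. unfold atom, preim_iter. rewrite iter_inverse; auto. }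
    destruct HP as [_ [_ Huniq]].
    destruct (Huniq (T w) k' (j - 1)%nat k (h n k - 1)%nat) as [-> Hjh]; auto;
      [destruct Hidx; split; auto; lia | split; auto; lia |].
    destruct Hidx. lia.
Qed.

(* Statement (1): if lam is a continuous eigenvalue, lam^(h_k(n)) -> 1 uniformly in k: for x in
   B_k(n) and y = T^(-h_k(n)) x, both in the small roof, f x = lam^(h_k(n)) f y
   while f x, f y are both close to f x0 /= 0. *)
Lemma eigenvalue_defect_vanishes lam :
  minimal_cantor_system d T -> CKR_sequence d T C h B -> Cx_norm lam = 1 ->
  continuous_eigenvalue d T lam ->
  forall eps, eps > 0 -> exists N : nat, forall n : nat, (n >= N)%nat ->
    forall k : nat, (1 <= k <= C n)%nat -> Cx_norm (Cx_sub (Cx_pow lam (h n k)) Cx1) < eps.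
Proof.
  intros [Hcant [[_ [Sv [_ [_ HTS]]]] Hmin]] Hseq Hlam [f [Hcont [Hne Hf]]] eps Heps.
  pose proof Hseq as [HP [_ [_ [_ [[x0 Hx0] _]]]]].
  assert (Hfx0 : Cx_norm (f x0) > 0).
  { destruct (Cx_norm_nonneg (f x0)) as [Hpos | Hzero]; [exact Hpos|].
    exfalso. apply (eigenfunction_nowhere_zero f lam Hlam Hmin Hcont Hne Hf x0).
    apply Cx_norm_eq0. auto. }
  destruct (Hcont x0 (Cx_norm (f x0) * eps / (2 + eps))) as [delta [Hd Hnear]].
  { apply Rdiv_lt_0_compat; [apply Rmult_lt_0_compat|]; lra. }
  destruct (roof_shrinks_to_point x0 Hcant Hseq Hx0 delta Hd) as [N HN].
  exists N. intros n Hn k Hk.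
  destruct (HP n) as [Hbase _]. destruct (Hbase k Hk) as [_ [[x Hx] _]].
  set (y := Nat.iter (h n k) Sv x).
  assert (Hy : roof C B n y) by (apply (roof_back_from_base Sv n k x); auto).
  assert (Hxy : f x = Cx_mul (Cx_pow lam (h n k)) (f y))
    by (unfold y; rewrite <- (eigenfunction_iter f lam), iter_inverse; auto).
  apply (Cx_factor_near_one _ (f x) (f y) (f x0)); auto; apply Hnear, (HN n); auto.
  exists k. split; auto.
Qed.

(* Sufficiency. The n-th approximate eigenfunction is lam^(-entry time into B(n));
   it satisfies the eigen-equation at every point off the roof B(n). *)
Definition eigen_approx (lam : Cx) (n : nat) (x : X) : Cx :=
  Cx_pow (Cx_conj lam) (entry_time n x).

Lemma eigen_approx_unit lam n x : Cx_norm lam = 1 -> Cx_norm (eigen_approx lam n x) = 1.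
Proof. intro Hlam. apply Cx_norm_pow_unit. rewrite Cx_norm_conj. exact Hlam. Qed.

(* Off B(n) the entry time drops by one under T, giving the eigen-equation. *)
Lemma eigen_approx_shift lam n x :
  Cx_norm lam = 1 -> CKR_partition d T C h B n -> ~ roof C B n x ->
  eigen_approx lam n (T x) = Cx_mul lam (eigen_approx lam n x).
Proof.
  intros Hlam HP Hx. unfold eigen_approx.
  rewrite (entry_time_skip n HP x 1); [|intros i Hi; replace i with 0%nat by lia; exact Hx].
  simpl. rewrite Cx_mul_assoc, Cx_mul_conj_unit by exact Hlam.
  apply Cx_ext; simpl; ring.
Qed.

Lemma eigen_approx_increment lam n x :
  Cx_norm lam = 1 -> (1 <= C n)%nat ->
  CKR_partition d T C h B n -> CKR_partition d T C h B (S n) ->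
  subset (roof C B (S n)) (roof C B n) ->
  Cx_dist (eigen_approx lam (S n) x) (eigen_approx lam n x) <= series_term C h lam n.
Proof.
  intros Hlam HC HP HP1 Hnested. unfold eigen_approx.
  rewrite (entry_time_split n HP HP1 Hnested x), Cx_pow_add, dist_conj_pow; auto;
    [|apply Cx_norm_pow_unit; rewrite Cx_norm_conj; exact Hlam].
  set (y := Nat.iter (entry_time n x) T x).
  destruct (travel_defect n HP HP1 Hnested lam y Hlam) as [c [Hlen Hdef]];
    [apply entry_time_roof; exact HP|].
  destruct (entry_time_lt_height (S n) HP1 y) as [k [Hk Hlt]].
  pose proof (h_le_max_h C h (S n) k Hk).
  assert (Hmin : 0 < INR (min_h C h n))
    by (apply lt_0_INR; pose proof (min_h_pos C h n HC (heights_pos n HP)); lia).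
  assert (Hc : INR c * INR (min_h C h n) <= INR (max_h C h (S n)))
    by (rewrite <- mult_INR; apply le_INR; lia).
  eapply Rle_trans; [exact Hdef|]. unfold series_term.
  apply Rmult_le_compat_r; [apply max_defect_nonneg|].
  apply (Rmult_le_reg_r (INR (min_h C h n))); auto.
  unfold Rdiv. rewrite Rmult_assoc, Rinv_l by lra. lra.
Qed.

Lemma eigen_approx_uniform_limit lam :
  minimal_cantor_system d T -> CKR_sequence d T C h B -> Cx_norm lam = 1 ->
  (exists l : R, Un_cv (fun M : nat => sum_f_R0 (fun i => series_term C h lam (S i)) M) l) ->
  exists f : X -> Cx, continuous_map d Cx_dist f /\
    forall eps, eps > 0 -> exists N, forall i x, (i >= N)%nat ->
      Cx_dist (eigen_approx lam (S i) x) (f x) <= eps.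
Proof.
  intros [[_ [Hinh _]] [[HT _] _]] [HP [_ [Hnested _]]] Hlam Hsum.
  set (g := fun i => eigen_approx lam (S i)).
  assert (Hinc : forall i x, Cx_dist (g (S i) x) (g i x) <= series_term C h lam (S i)).
  { intros i x. apply eigen_approx_increment; auto. apply levels_nonempty; auto. }
  destruct (uniform_limit g (summable_increments_cauchy g _ Hinc Hsum)) as [f Hunif].
  exists f. split; [|exact Hunif].
  apply (uniform_limit_locally_constant X d g f); [|exact Hunif].
  intros i x. destruct (entry_time_locally_constant (S i) (HP (S i)) HT x) as [delta [Hd Hconst]].
  exists delta. split; auto. intros y Hy.
  unfold g, eigen_approx. rewrite (Hconst y Hy). reflexivity.
Qed.

Lemma summable_series_eigenvalue lam :
  minimal_cantor_system d T -> CKR_sequence d T C h B -> Cx_norm lam = 1 ->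
  (exists l : R, Un_cv (fun M : nat => sum_f_R0 (fun i => series_term C h lam (S i)) M) l) ->
  continuous_eigenvalue d T lam.
Proof.
  intros Hsys Hseq Hlam Hsum.
  destruct (eigen_approx_uniform_limit lam Hsys Hseq Hlam Hsum) as [f [Hcont Hunif]].
  destruct Hsys as [[_ [[x1 _] [_ [_ Hperf]]]] [[HT _] _]].
  destruct Hseq as [HP [_ [Hnested [_ [[x0 Hx0] _]]]]].
  (* f has modulus one, hence does not vanish *)
  assert (Hnonzero : f x1 <> Cx0).
  { intro Hf. destruct (Hunif (1/2)) as [N HN]; [lra|].
    specialize (HN N x1 (le_n N)). rewrite Hf, Cx_dist_0_r, eigen_approx_unit in HN; lra. }
  (* every point but x0 eventually leaves the roofs, where the approximations are exact *)
  assert (Hoff : forall x, x <> x0 -> f (T x) = Cx_mul lam (f x)).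
  { intros x Hx. assert (Hout : exists n0, ~ roof C B n0 x).
    { apply NNPP. intro Hin. apply Hx, Hx0. intro n. apply NNPP. eauto. }
    destruct Hout as [n0 Hn0]. apply Cx_eq_of_close. intros eps Heps.
    destruct (Hunif eps Heps) as [N HN]. set (i := Nat.max N n0).
    exists (eigen_approx lam (S i) (T x)). split; [apply HN; lia|].
    rewrite eigen_approx_shift, Cx_dist_mul_l, Hlam, Rmult_1_l; auto; [apply HN; lia|].
    intro Hroof. apply Hn0. apply (roof_antitone Hnested n0 (S i)); auto. lia. }
  exists f. split; [exact Hcont | split; [exists x1; exact Hnonzero|]].
  intro x. destruct (classic (x = x0)) as [-> | Hx]; [|auto].
  apply (continuous_agree_at_limit_point X d (fun y => f (T y)) (fun y => Cx_mul lam (f y)));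
    auto using continuous_comp, continuous_mul_l.
Qed.

End Towers.

Theorem mainTheorem9 (X : Type) (d : X -> X -> R) (T : X -> X)
  (C : nat -> nat) (h : nat -> nat -> nat) (B : nat -> nat -> X -> Prop) (lam : Cx) :
  minimal_cantor_system d T ->
  CKR_sequence d T C h B ->
  Cx_norm lam = 1 ->
  (continuous_eigenvalue d T lam ->
     forall eps, eps > 0 -> exists N : nat, forall n : nat, (n >= N)%nat ->
       forall k : nat, (1 <= k <= C n)%nat ->
         Cx_norm (Cx_sub (Cx_pow lam (h n k)) Cx1) < eps)
  /\
  ((exists l : R, Un_cv (fun M : nat => sum_f_R0 (fun i => series_term C h lam (S i)) M) l) ->
     continuous_eigenvalue d T lam).
Proof.
  intros Hsys Hseq Hlam. split.
  - exact (eigenvalue_defect_vanishes X d T C h B lam Hsys Hseq Hlam).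
  - exact (summable_series_eigenvalue X d T C h B lam Hsys Hseq Hlam).
Qed.
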